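(* Let $M\in\mathbb R^{N\times N}$ be symmetric positive definite and $\eta>0$. Let $\{a_k\}_{k\ge1}$ be a nonnegative sequence and $\{z_k\}_{k\ge0}$ a sequence in $\mathbb R^N$ with $z_1=z_0$. Fix $z^*\in\mathbb R^N$ and define $w_k=\eta(z_k-z^* )+a_k(z_k-z_{k-1})$ for $k\ge1$. Assume $W:=\sup_{k\ge1}\|w_k\|_M<+\infty$. Then for all $k\ge1$, $\|z_k-z^*\|_M\le W/\eta$ and $a_k\|z_k-z_{k-1}\|_M\le 2W$.
   Context: $\|z\|_M^2:=\langle Mz,z\rangle$. *)

From HB Require Import structures.
From mathcomp Require Import all_boot all_order all_algebra.
From mathcomp Require Import boolp classical_sets reals.
Set Implicit Arguments. Unset Strict Implicit. Unset Printing Implicit Defensive.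
Import Order.TTheory GRing.Theory Num.Theory.
Local Open Scope ring_scope.

Definition Mform (R : realType) (N : nat) (M : 'M[R]_N) (z : 'cV[R]_N) : R :=
  (z^T *m M *m z) 0 0.

Definition Mnorm (R : realType) (N : nat) (M : 'M[R]_N) (z : 'cV[R]_N) : R :=
  Num.sqrt (Mform M z).

Definition spd (R : realType) (N : nat) (M : 'M[R]_N) : Prop :=
  M^T = M /\ forall v : 'cV[R]_N, v != 0 -> 0 < Mform M v.

From HB Require Import structures.
From mathcomp Require Import all_boot all_order all_algebra.
From mathcomp Require Import boolp classical_sets reals.
From mathcomp Require Import lra.
Set Implicit Arguments. Unset Strict Implicit. Unset Printing Implicit Defensive.
Import Order.TTheory GRing.Theory Num.Theory.
Local Open Scope ring_scope.

(* By Cauchy-Schwarz for (u, v) |-> <M u, v>, ||.||_M obeys the triangle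
   inequality.  With e_k := z_k - z^* we have z_k - z_{k-1} = e_k - e_{k-1}, so
   (eta + a_k) e_k = w_k + a_k e_{k-1} and hence
   (eta + a_k) ||e_k||_M <= W + a_k ||e_{k-1}||_M; the bound W / eta is thus
   inherited from e_{k-1}, and it holds for e_1 = e_0.  Finally
   a_k (z_k - z_{k-1}) = w_k - eta e_k has M-norm at most W + eta (W / eta). *)

Section Mnorm.
Variables (R : realType) (N : nat) (M : 'M[R]_N).
Hypothesis M_spd : spd M.

Definition Mdot (u v : 'cV[R]_N) : R := (u^T *m M *m v) 0 0.

Lemma MformE v : Mform M v = Mdot v v.
Proof. by []. Qed.

Lemma MdotDl u1 u2 v : Mdot (u1 + u2) v = Mdot u1 v + Mdot u2 v.
Proof. by rewrite /Mdot linearD /= !mulmxDl mxE. Qed.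

Lemma MdotDr u v1 v2 : Mdot u (v1 + v2) = Mdot u v1 + Mdot u v2.
Proof. by rewrite /Mdot mulmxDr mxE. Qed.

Lemma MdotZl c u v : Mdot (c *: u) v = c * Mdot u v.
Proof. by rewrite /Mdot linearZ /= -!scalemxAl mxE. Qed.

Lemma MdotZr c u v : Mdot u (c *: v) = c * Mdot u v.
Proof. by rewrite /Mdot -scalemxAr mxE. Qed.

Lemma MdotC u v : Mdot u v = Mdot v u.
Proof.
have -> : Mdot u v = (u^T *m M *m v)^T 0 0 by rewrite mxE.
by rewrite !trmx_mul trmxK M_spd.1 mulmxA.
Qed.

Lemma Mdot0l v : Mdot 0 v = 0.
Proof. by rewrite -(scale0r 0) MdotZl mul0r. Qed.

Lemma Mform_ge0 v : 0 <= Mform M v.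
Proof.
have [->|v_neq0] := eqVneq v 0; first by rewrite MformE Mdot0l.
exact/ltW/(M_spd.2 v v_neq0).
Qed.

Lemma Mdot_CauchySchwarz u v : Mdot u v ^+ 2 <= Mform M u * Mform M v.
Proof.
have [->|u_neq0] := eqVneq u 0; first by rewrite MformE !Mdot0l expr0n mul0r.
have Mu_gt0 := M_spd.2 u u_neq0.
have psd_uv := Mform_ge0 (Mform M u *: v - Mdot u v *: u).
rewrite MformE -scaleNr !(MdotDl, MdotDr, MdotZl, MdotZr) (MdotC v u) in psd_uv.
rewrite !MformE in Mu_gt0 psd_uv *; nra.
Qed.

Lemma MnormZ c v : Mnorm M (c *: v) = `|c| * Mnorm M v.
Proof.
rewrite /Mnorm !MformE MdotZl MdotZr mulrA -expr2.
by rewrite sqrtrM ?sqr_ge0 // sqrtr_sqr.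
Qed.

Lemma MnormN v : Mnorm M (- v) = Mnorm M v.
Proof. by rewrite -scaleN1r MnormZ normrN normr1 mul1r. Qed.

Lemma MnormD u v : Mnorm M (u + v) <= Mnorm M u + Mnorm M v.
Proof.
have Mdot_le : Mdot u v <= Mnorm M u * Mnorm M v.
  rewrite -sqrtrM ?Mform_ge0 // (le_trans (ler_norm _)) // -sqrtr_sqr.
  exact/ler_wsqrtr/Mdot_CauchySchwarz.
rewrite -(ger0_norm (addr_ge0 (sqrtr_ge0 _) (sqrtr_ge0 _))) -sqrtr_sqr.
apply: ler_wsqrtr; rewrite sqrrD !sqr_sqrtr ?Mform_ge0 //.
rewrite !MformE !(MdotDl, MdotDr) (MdotC v u).
rewrite /Mnorm !MformE in Mdot_le; lra.
Qed.

End Mnorm.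

Lemma bound_div_stable (R : realFieldType) (eta a W x y : R) :
  0 < eta -> 0 <= a -> (eta + a) * x <= W + a * y -> y <= W / eta ->
  x <= W / eta.
Proof.
move=> eta_gt0 a_ge0 x_step y_le.
have W_eq : W = eta * (W / eta) by rewrite mulrC divfK // gt_eqF.
rewrite -(@ler_pM2l _ (eta + a)); last by rewrite ltr_wpDr.
apply: le_trans x_step _; rewrite mulrDl -W_eq lerD2l.
exact: ler_wpM2l.
Qed.

Section InertialSequence.
Variables (R : realType) (N : nat) (M : 'M[R]_N) (eta W : R).
Variables (a : nat -> R) (z : nat -> 'cV[R]_N) (zstar : 'cV[R]_N).
Hypotheses (M_spd : spd M) (eta_gt0 : 0 < eta).
Hypothesis a_ge0 : forall k, (1 <= k)%N -> 0 <= a k.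

Local Notation w k := (eta *: (z k - zstar) + a k *: (z k - z k.-1)).

Hypothesis w_le : forall k, (1 <= k)%N -> Mnorm M (w k) <= W.

Lemma Mnorm_dev_step k : (1 <= k)%N ->
  (eta + a k) * Mnorm M (z k - zstar) <= W + a k * Mnorm M (z k.-1 - zstar).
Proof.
move=> k_ge1; have ak_ge0 := a_ge0 k_ge1.
have weight_ge0 : 0 <= eta + a k by rewrite addr_ge0 // ltW.
have dev_eq : (eta + a k) *: (z k - zstar) = w k + a k *: (z k.-1 - zstar).
  by rewrite scalerDl -addrA -scalerDr addrA subrK.
rewrite -[eta + a k]ger0_norm // -MnormZ dev_eq.
apply: le_trans (MnormD M_spd _ _) _.
by rewrite MnormZ ger0_norm // lerD2r w_le.
Qed.

Hypothesis z10 : z 1%N = z 0%N.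

Lemma Mnorm_dev_le k : (1 <= k)%N -> Mnorm M (z k - zstar) <= W / eta.
Proof.
case: k => // k _; elim: k => [|k IHk].
  have := Mnorm_dev_step (isT : (1 <= 1)%N).
  by rewrite [z _.-1]/= -z10 mulrDl lerD2r ler_pdivlMr // mulrC.
have := Mnorm_dev_step (isT : (1 <= k.+2)%N); rewrite [z _.-1]/= => dev_step.
exact: bound_div_stable eta_gt0 (a_ge0 _) dev_step IHk.
Qed.

Lemma Mnorm_inertia_le k : (1 <= k)%N ->
  a k * Mnorm M (z k - z k.-1) <= 2 * W.
Proof.
move=> k_ge1; have dev_le := Mnorm_dev_le k_ge1.
have inertia_eq : a k *: (z k - z k.-1) = w k - eta *: (z k - zstar).
  by rewrite addrAC subrr add0r.
rewrite -[a k]ger0_norm ?a_ge0 // -MnormZ inertia_eq.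
apply: le_trans (MnormD M_spd _ _) _.
rewrite MnormN MnormZ gtr0_norm // mulr2n mulrDl mul1r lerD ?w_le //.
by rewrite -ler_pdivlMl // mulrC.
Qed.

End InertialSequence.

Local Open Scope classical_set_scope.

Theorem lemmaA2 (R : realType) (N : nat) (M : 'M[R]_N) (eta : R)
  (a : nat -> R) (z : nat -> 'cV[R]_N) (zstar : 'cV[R]_N) :
  spd M -> 0 < eta ->
  (forall k, (1 <= k)%N -> 0 <= a k) ->
  z 1%N = z 0%N ->
  let w := fun k : nat => eta *: (z k - zstar) + a k *: (z k - z k.-1) in
  let S := [set Mnorm M (w k) | k in [set k : nat | (1 <= k)%N]] in
  has_ubound S ->
  let W := sup S in
  forall k : nat, (1 <= k)%N ->
    Mnorm M (z k - zstar) <= W / eta /\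
    a k * Mnorm M (z k - z k.-1) <= 2 * W.
Proof.
move=> M_spd eta_gt0 a_ge0 z10 w S S_ub W.
have w_le : forall k, (1 <= k)%N -> Mnorm M (w k) <= W.
  move=> k k_ge1; apply: sup_upper_bound; last by exists k.
  by split => //; exists (Mnorm M (w 1%N)), 1%N.
move=> k k_ge1; split.
- exact: Mnorm_dev_le M_spd eta_gt0 a_ge0 w_le z10 k k_ge1.
- exact: Mnorm_inertia_le M_spd eta_gt0 a_ge0 w_le z10 k k_ge1.
Qed.
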